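(* The logic $\mathsf{iCC}:=\mathsf{ICK}\oplus(p\mathrel{\Box\!\!\!\rightarrow} p)\oplus(((p\mathrel{\Box\!\!\!\rightarrow} q)\wedge((p\wedge q)\mathrel{\Box\!\!\!\rightarrow} r))\to(p\mathrel{\Box\!\!\!\rightarrow} r))\oplus(((p\mathrel{\Box\!\!\!\rightarrow} q)\wedge(p\mathrel{\Box\!\!\!\rightarrow} r))\to((p\wedge q)\mathrel{\Box\!\!\!\rightarrow} r))$ is sound and complete with respect to the class of cautious conditional frames.
   Context: Formulas: $\phi ::= p\mid\bot\mid\phi\wedge\phi\mid\phi\vee\phi\mid\phi\to\phi\mid\phi\mathrel{\Box\!\!\!\rightarrow}\phi$. $\mathsf{ICK}\oplus\Gamma$ is the smallest set containing intuitionistic propositional logic, $\Gamma$, $(p\mathrel{\Box\!\!\!\rightarrow}(q\wedge r))\leftrightarrow((p\mathrel{\Box\!\!\!\rightarrow} q)\wedge(p\mathrel{\Box\!\!\!\rightarrow} r))$ and $(p\mathrel{\Box\!\!\!\rightarrow}\top)\leftrightarrow\top$, closed under uniform substitution, modus ponens and congruence rules for both arguments of $\mathrel{\Box\!\!\!\rightarrow}$. A conditional frame is $(X,\leq,\mathcal{R})$, $(X,\leq)$ a nonempty preorder, $\mathcal{R}=\{R_a\mid a\text{ an upset}\}$ with $(\leq\circ R_a)\subseteq(R_a\circ\leq)$; valuations assign upsets to letters and $x\models\phi\mathrel{\Box\!\!\!\rightarrow}\psi$ iff every $y$ with $xR_{V(\phi)}y$ satisfies $\psi$. A cautious conditional frame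 is one satisfying, for all $x$ and upsets $a,b$: $R_a[x]\subseteq a$, and $R_a[x]\subseteq b\subseteq a$ implies ${\uparrow}R_a[x]={\uparrow}R_b[x]$. *)

From Stdlib Require Import List.

Inductive form : Type :=
| Var : nat -> form
| Bot : form
| And : form -> form -> form
| Or  : form -> form -> form
| Imp : form -> form -> form
| Cond : form -> form -> form.

Definition Top : form := Imp Bot Bot.
Definition Iff (a b : form) : form := And (Imp a b) (Imp b a).

Fixpoint subst (s : nat -> form) (f : form) : form :=
  match f with
  | Var n => s n
  | Bot => Bot
  | And a b => And (subst s a) (subst s b)
  | Or a b => Or (subst s a) (subst s b)
  | Imp a b => Imp (subst s a) (subst s b)
  | Cond a b => Cond (subst s a) (subst s b)
  end.

Definition p := Var 0.
Definition q := Var 1.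
Definition r := Var 2.

Inductive ipc_axiom : form -> Prop :=
| ax_K  : forall a b, ipc_axiom (Imp a (Imp b a))
| ax_S  : forall a b c, ipc_axiom (Imp (Imp a (Imp b c)) (Imp (Imp a b) (Imp a c)))
| ax_A1 : forall a b, ipc_axiom (Imp (And a b) a)
| ax_A2 : forall a b, ipc_axiom (Imp (And a b) b)
| ax_AI : forall a b, ipc_axiom (Imp a (Imp b (And a b)))
| ax_O1 : forall a b, ipc_axiom (Imp a (Or a b))
| ax_O2 : forall a b, ipc_axiom (Imp b (Or a b))
| ax_OE : forall a b c, ipc_axiom (Imp (Imp a c) (Imp (Imp b c) (Imp (Or a b) c)))
| ax_EFQ : forall a, ipc_axiom (Imp Bot a).

Inductive ick_axiom : form -> Prop :=
| ick_C : ick_axiom (Iff (Cond p (And q r)) (And (Cond p q) (Cond p r)))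
| ick_N : ick_axiom (Iff (Cond p Top) Top).

Inductive icc_extra : form -> Prop :=
| icc_id  : icc_extra (Cond p p)
| icc_cut : icc_extra (Imp (And (Cond p q) (Cond (And p q) r)) (Cond p r))
| icc_cm  : icc_extra (Imp (And (Cond p q) (Cond p r)) (Cond (And p q) r)).

Inductive ICK_plus (Gamma : form -> Prop) : form -> Prop :=
| d_ipc  : forall f, ipc_axiom f -> ICK_plus Gamma f
| d_gam  : forall f, Gamma f -> ICK_plus Gamma f
| d_ick  : forall f, ick_axiom f -> ICK_plus Gamma f
| d_subst : forall s f, ICK_plus Gamma f -> ICK_plus Gamma (subst s f)
| d_mp   : forall a b, ICK_plus Gamma (Imp a b) -> ICK_plus Gamma a -> ICK_plus Gamma b
| d_congl : forall a b c, ICK_plus Gamma (Iff a b) ->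
              ICK_plus Gamma (Iff (Cond a c) (Cond b c))
| d_congr : forall a b c, ICK_plus Gamma (Iff a b) ->
              ICK_plus Gamma (Iff (Cond c a) (Cond c b)).

Definition iCC : form -> Prop := ICK_plus icc_extra.

(* The family R = {R_a | a upset} is represented as a function
   from predicates to relations; it is only used on upsets, and it is required to
   depend only on the extension of the predicate. *)
Record cframe : Type := CFrame {
  W : Type;
  le : W -> W -> Prop;
  R : (W -> Prop) -> W -> W -> Prop;
  W_inhabited : inhabited W;
  le_refl : forall x, le x x;
  le_trans : forall x y z, le x y -> le y z -> le x z;
  R_ext : forall a b : W -> Prop, (forall x, a x <-> b x) ->
            forall x y, R a x y <-> R b x y;
  R_coh : forall a : W -> Prop, (forall x y, le x y -> a x -> a y) ->
            forall x x' y', le x x' -> R a x' y' -> exists y, R a x y /\ le y y'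
}.

Definition upset (F : cframe) (a : W F -> Prop) : Prop :=
  forall x y, le F x y -> a x -> a y.

Fixpoint forces (F : cframe) (V : nat -> W F -> Prop) (x : W F) (f : form) : Prop :=
  match f with
  | Var n => V n x
  | Bot => False
  | And a b => forces F V x a /\ forces F V x b
  | Or a b => forces F V x a \/ forces F V x b
  | Imp a b => forall y, le F x y -> forces F V y a -> forces F V y b
  | Cond a b => forall y, R F (fun z => forces F V z a) x y -> forces F V y b
  end.

Definition valuation (F : cframe) (V : nat -> W F -> Prop) : Prop :=
  forall n, upset F (V n).

Definition valid (F : cframe) (f : form) : Prop :=
  forall V, valuation F V -> forall x, forces F V x f.

Definition upclosure (F : cframe) (S : W F -> Prop) : W F -> Prop :=
  fun y => exists s, S s /\ le F s y.

Definition cautious (F : cframe) : Prop :=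
  (forall x (a : W F -> Prop), upset F a -> forall y, R F a x y -> a y) /\
  (forall x (a b : W F -> Prop), upset F a -> upset F b ->
     (forall y, R F a x y -> b y) -> (forall y, b y -> a y) ->
     forall y, upclosure F (R F a x) y <-> upclosure F (R F b x) y).

(* The only point that is not routine is
   that in a cautious frame, if every R_a-successor of x lies in the upset b,
   then R_a[x] and R_(a /\ b)[x] generate the same upset; this validates both
   cumulative transitivity and cautious monotonicity.

   Completeness uses the canonical model of prime theories.  Say that a formula
   a represents an upset A of prime theories at G when every prime theory
   containing {psi | a []-> psi in G} lies in A and every member of A contains
   a.  If some a represents A at G, R_A relates G to the prime theories
   containing {psi | a []-> psi in G}; cumulative transitivity and cautious
   monotonicity make this independent of the choice of a.  Otherwise
   R_A[G] = A.  Since p []-> p makes every a represent its own truth set, the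
   truth lemma holds, and the frame is cautious by construction. *)

From Stdlib Require Import Classical Lia.
From Stdlib Require Cantor.

Section Soundness.

Variable F : cframe.

Lemma forces_upset (V : nat -> W F -> Prop) (f : form) :
  valuation F V -> upset F (fun x => forces F V x f).
Proof.
  intro hV; unfold upset.
  induction f as [n| |a IHa b IHb|a IHa b IHb|a IHa b IHb|a IHa b IHb];
    intros x y hxy H; simpl in H |- *.
  - exact (hV n x y hxy H).
  - exact H.
  - destruct H; split; eauto.
  - destruct H; [left|right]; eauto.
  - intros z hyz; apply H; eapply le_trans; eauto.
  - intros z Hz.
    destruct (R_coh F _ IHa x y z hxy Hz) as [w [Hw hwz]].
    exact (IHb w z hwz (H w Hw)).
Qed.

Lemma forces_subst (V : nat -> W F -> Prop) (s : nat -> form) (f : form) x :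
  forces F V x (subst s f) <-> forces F (fun n y => forces F V y (s n)) x f.
Proof.
  revert x.
  induction f as [n| |a IHa b IHb|a IHa b IHb|a IHa b IHb|a IHa b IHb];
    intro x; simpl.
  - tauto.
  - tauto.
  - rewrite IHa, IHb; tauto.
  - rewrite IHa, IHb; tauto.
  - split; intros H y hxy Ha; apply IHb, H, IHa; assumption.
  - split; intros H y Hy; apply IHb, H; revert Hy; apply R_ext; intro z;
      rewrite IHa; tauto.
Qed.

Lemma valid_iff_forces a b : valid F (Iff a b) ->
  forall V, valuation F V -> forall x, forces F V x a <-> forces F V x b.
Proof.
  intros H V hV x; destruct (H V hV x) as [Hab Hba].
  split; intro; [apply Hab|apply Hba]; auto using le_refl.
Qed.

Lemma valid_mp a b : valid F (Imp a b) -> valid F a -> valid F b.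
Proof. intros Hab Ha V hV x; exact (Hab V hV x x (le_refl F x) (Ha V hV x)). Qed.

Lemma valid_subst s f : valid F f -> valid F (subst s f).
Proof.
  intros H V hV x; apply forces_subst, H.
  intro n; apply forces_upset, hV.
Qed.

Lemma valid_cond_congl a b c : valid F (Iff a b) -> valid F (Iff (Cond a c) (Cond b c)).
Proof.
  intros H V hV x.
  pose proof (valid_iff_forces a b H V hV) as E.
  split; intros y _ Hc z Hz; apply Hc; revert Hz; apply R_ext; intro u;
    rewrite E; tauto.
Qed.

Lemma valid_cond_congr a b c : valid F (Iff a b) -> valid F (Iff (Cond c a) (Cond c b)).
Proof.
  intros H V hV x.
  pose proof (valid_iff_forces a b H V hV) as E.
  split; intros y _ Hc z Hz; apply E, Hc, Hz.
Qed.

Lemma valid_ipc_axiom f : ipc_axiom f -> valid F f.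
Proof.
  intros Hf V hV x; destruct Hf; simpl.
  - intros y _ Ha z hyz _; exact (forces_upset V a hV y z hyz Ha).
  - intros y _ Habc z hyz Hab w hzw Ha.
    apply (Habc w (le_trans F _ _ _ hyz hzw) Ha w (le_refl F w)), Hab; assumption.
  - intros y _ [Ha _]; exact Ha.
  - intros y _ [_ Hb]; exact Hb.
  - intros y _ Ha z hyz Hb; split; [exact (forces_upset V a hV y z hyz Ha)|exact Hb].
  - intros y _ Ha; left; exact Ha.
  - intros y _ Hb; right; exact Hb.
  - intros y _ Hac z hyz Hbc w hzw [Ha|Hb].
    + exact (Hac w (le_trans F _ _ _ hyz hzw) Ha).
    + exact (Hbc w hzw Hb).
  - intros y _ [].
Qed.

Lemma valid_ick_axiom f : ick_axiom f -> valid F f.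
Proof.
  intros Hf V hV x; destruct Hf; simpl; split.
  - intros y _ H; split; intros z Hz; apply (H z Hz).
  - intros y _ [Hq Hr] z Hz; split; auto.
  - intros y _ _ z _ [].
  - intros y _ _ z _ w _ [].
Qed.

Hypothesis cautious_F : cautious F.

Lemma cautious_cond_restrict (a b c : W F -> Prop) x :
  upset F a -> upset F b -> upset F c -> (forall y, R F a x y -> b y) ->
  (forall y, R F a x y -> c y) <->
  (forall y, R F (fun z => a z /\ b z) x y -> c y).
Proof.
  intros ha hb hc Hab.
  destruct cautious_F as [succ_in same_upclosure].
  assert (hab : upset F (fun z => a z /\ b z)).
  { intros u v huv [Hu Hu']; split; [exact (ha u v huv Hu)|exact (hb u v huv Hu')]. }
  assert (E : forall y, upclosure F (R F a x) y <->
                        upclosure F (R F (fun z => a z /\ b z) x) y).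
  { apply same_upclosure; auto.
    - intros y Hy; split; [exact (succ_in x a ha y Hy)|exact (Hab y Hy)].
    - intros y [Hy _]; exact Hy. }
  split; intros Hc y Hy.
  - destruct (proj2 (E y) (ex_intro _ y (conj Hy (le_refl F y)))) as [s [Hs hsy]].
    exact (hc s y hsy (Hc s Hs)).
  - destruct (proj1 (E y) (ex_intro _ y (conj Hy (le_refl F y)))) as [s [Hs hsy]].
    exact (hc s y hsy (Hc s Hs)).
Qed.

Lemma valid_icc_extra f : icc_extra f -> valid F f.
Proof.
  intros Hf V hV x.
  assert (cond_restrict : forall y, forces F V y (Cond p q) ->
    forces F V y (Cond p r) <-> forces F V y (Cond (And p q) r)).
  { intros y Hq; exact (cautious_cond_restrict (V 0) (V 1) (V 2) y
                           (hV 0) (hV 1) (hV 2) Hq). }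
  destruct Hf; simpl.
  - intros y Hy; exact (proj1 cautious_F x (V 0) (hV 0) y Hy).
  - intros y _ [Hq Hr]; exact (proj2 (cond_restrict y Hq) Hr).
  - intros y _ [Hq Hr]; exact (proj1 (cond_restrict y Hq) Hr).
Qed.

End Soundness.

Lemma ICK_plus_sound (F : cframe) (Gamma : form -> Prop) :
  (forall f, Gamma f -> valid F f) -> forall f, ICK_plus Gamma f -> valid F f.
Proof.
  intros HGamma f Hf.
  induction Hf; eauto using valid_ipc_axiom, valid_ick_axiom, valid_subst,
    valid_mp, valid_cond_congl, valid_cond_congr.
Qed.

Lemma iCC_sound f : iCC f -> forall F, cautious F -> valid F f.
Proof.
  intros Hf F HF; exact (ICK_plus_sound F icc_extra (valid_icc_extra F HF) f Hf).
Qed.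

Section Derivations.

Variable Gamma : form -> Prop.

Inductive derives (T : form -> Prop) : form -> Prop :=
| der_hyp a : T a -> derives T a
| der_thm a : ICK_plus Gamma a -> derives T a
| der_mp a b : derives T (Imp a b) -> derives T a -> derives T b.

Definition extend (T : form -> Prop) (x : form) : form -> Prop := fun y => T y \/ y = x.

Lemma derives_mono (T T' : form -> Prop) a :
  (forall x, T x -> T' x) -> derives T a -> derives T' a.
Proof.
  intros HT D; induction D.
  - apply der_hyp; auto.
  - apply der_thm; auto.
  - eapply der_mp; eauto.
Qed.

Lemma derives_ipc T f : ipc_axiom f -> derives T f.
Proof. intro; apply der_thm, d_ipc; assumption. Qed.

Lemma derives_extend T x : derives (extend T x) x.
Proof. apply der_hyp; right; reflexivity. Qed.

Lemma ICK_imp_refl a : ICK_plus Gamma (Imp a a).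
Proof.
  apply (d_mp _ (Imp a (Imp a a))); [|apply d_ipc, ax_K].
  apply (d_mp _ (Imp a (Imp (Imp a a) a))); apply d_ipc; [apply ax_S|apply ax_K].
Qed.

Lemma deduction T x f : derives (extend T x) f -> derives T (Imp x f).
Proof.
  intro D; induction D as [a [Ha|Ha]|a Ha|a b _ IH1 _ IH2].
  - eapply der_mp; [apply derives_ipc, ax_K|apply der_hyp; assumption].
  - subst; apply der_thm, ICK_imp_refl.
  - eapply der_mp; [apply derives_ipc, ax_K|apply der_thm; assumption].
  - eapply der_mp; [eapply der_mp; [apply derives_ipc, ax_S|exact IH1]|exact IH2].
Qed.

Lemma derives_empty f : derives (fun _ => False) f -> ICK_plus Gamma f.
Proof. intro D; induction D; [contradiction|assumption|eapply d_mp; eauto]. Qed.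

Lemma ICK_imp_intro a b :
  derives (extend (fun _ => False) a) b -> ICK_plus Gamma (Imp a b).
Proof. intro D; apply derives_empty, deduction, D. Qed.

Lemma derives_and_intro T a b : derives T a -> derives T b -> derives T (And a b).
Proof. intros; eapply der_mp; [eapply der_mp; [apply derives_ipc, ax_AI|]|]; eauto. Qed.

Lemma derives_and_elim1 T a b : derives T (And a b) -> derives T a.
Proof. intro; eapply der_mp; [apply derives_ipc, ax_A1|eauto]. Qed.

Lemma derives_and_elim2 T a b : derives T (And a b) -> derives T b.
Proof. intro; eapply der_mp; [apply derives_ipc, ax_A2|eauto]. Qed.

Lemma ICK_iff_intro a b :
  ICK_plus Gamma (Imp a b) -> ICK_plus Gamma (Imp b a) -> ICK_plus Gamma (Iff a b).
Proof. intros; eapply d_mp; [eapply d_mp; [apply d_ipc, ax_AI|]|]; eauto. Qed.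

Lemma ICK_iff_elim1 a b : ICK_plus Gamma (Iff a b) -> ICK_plus Gamma (Imp a b).
Proof. intro; eapply d_mp; [apply d_ipc, ax_A1|eauto]. Qed.

Lemma ICK_iff_elim2 a b : ICK_plus Gamma (Iff a b) -> ICK_plus Gamma (Imp b a).
Proof. intro; eapply d_mp; [apply d_ipc, ax_A2|eauto]. Qed.

Lemma ICK_modus_ponens a b : ICK_plus Gamma (Imp (And (Imp a b) a) b).
Proof.
  apply ICK_imp_intro.
  eapply der_mp; [eapply derives_and_elim1|eapply derives_and_elim2]; apply derives_extend.
Qed.

Lemma ICK_iff_andr a b : ICK_plus Gamma (Imp a b) -> ICK_plus Gamma (Iff a (And a b)).
Proof.
  intro H; apply ICK_iff_intro; [|apply d_ipc, ax_A1].
  apply ICK_imp_intro, derives_and_intro; [apply derives_extend|].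
  eapply der_mp; [apply der_thm, H|apply derives_extend].
Qed.

Lemma ICK_iff_andl a b : ICK_plus Gamma (Imp b a) -> ICK_plus Gamma (Iff (And a b) b).
Proof.
  intro H; apply ICK_iff_intro; [apply d_ipc, ax_A2|].
  apply ICK_imp_intro, derives_and_intro; [|apply derives_extend].
  eapply der_mp; [apply der_thm, H|apply derives_extend].
Qed.

Definition subst3 (a b c : form) (n : nat) : form :=
  match n with 0 => a | 1 => b | _ => c end.

Lemma ICK_cond_and a b c :
  ICK_plus Gamma (Iff (Cond a (And b c)) (And (Cond a b) (Cond a c))).
Proof. exact (d_subst _ (subst3 a b c) _ (d_ick _ _ ick_C)). Qed.

Lemma ICK_cond_top a : ICK_plus Gamma (Iff (Cond a Top) Top).
Proof. exact (d_subst _ (subst3 a a a) _ (d_ick _ _ ick_N)). Qed.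

End Derivations.

Definition code_node (k m n : nat) : nat := Cantor.to_nat (k, Cantor.to_nat (m, n)).

Fixpoint code (f : form) : nat :=
  match f with
  | Var n => code_node 0 n 0
  | Bot => code_node 1 0 0
  | And a b => code_node 2 (code a) (code b)
  | Or a b => code_node 3 (code a) (code b)
  | Imp a b => code_node 4 (code a) (code b)
  | Cond a b => code_node 5 (code a) (code b)
  end.

Lemma code_node_inj k m n k' m' n' :
  code_node k m n = code_node k' m' n' -> k = k' /\ m = m' /\ n = n'.
Proof.
  unfold code_node; intro H.
  apply Cantor.to_nat_inj, pair_equal_spec in H as [Hk H].
  apply Cantor.to_nat_inj, pair_equal_spec in H as [Hm Hn]; auto.
Qed.

Lemma code_inj f g : code f = code g -> f = g.
Proof.
  revert g; induction f; intro g; destruct g; intro H; simpl in H;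
    apply code_node_inj in H; destruct H as [Hk [Hm Hn]];
    try discriminate Hk; f_equal; auto.
Qed.

Section Lindenbaum.

Variable Gamma : form -> Prop.

Record ptheory : Type := {
  pt_mem :> form -> Prop;
  pt_closed : forall a, derives Gamma pt_mem a -> pt_mem a;
  pt_consistent : ~ pt_mem Bot;
  pt_prime : forall a b, pt_mem (Or a b) -> pt_mem a \/ pt_mem b
}.

Variables (T : form -> Prop) (phi : form).

Fixpoint lindenbaum_stage (n : nat) : form -> Prop :=
  match n with
  | 0 => T
  | S n => fun x => lindenbaum_stage n x \/
             (code x = n /\ ~ derives Gamma (extend (lindenbaum_stage n) x) phi)
  end.

Definition lindenbaum_limit : form -> Prop := fun x => exists n, lindenbaum_stage n x.

Lemma lindenbaum_stage_mono n m : n <= m -> forall x, lindenbaum_stage n x -> lindenbaum_stage m x.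
Proof. induction 1; simpl; auto. Qed.

Hypothesis T_not_phi : ~ derives Gamma T phi.

Lemma lindenbaum_stage_not_phi n : ~ derives Gamma (lindenbaum_stage n) phi.
Proof.
  induction n as [|n IHn]; simpl; [exact T_not_phi|]; intro D.
  destruct (classic (exists x, code x = n /\
                               ~ derives Gamma (extend (lindenbaum_stage n) x) phi))
    as [[x [Hx Hnx]]|Hnone].
  - apply Hnx; revert D; apply derives_mono.
    intros y [Hy|[Hy _]]; [left; exact Hy|right; apply code_inj; congruence].
  - apply IHn; revert D; apply derives_mono.
    intros y [Hy|Hy]; [exact Hy|exfalso; apply Hnone; exists y; exact Hy].
Qed.

Lemma lindenbaum_limit_compact a :
  derives Gamma lindenbaum_limit a -> exists n, derives Gamma (lindenbaum_stage n) a.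
Proof.
  intro D; induction D as [a [n Hn]|a Ha|a b _ [n1 IH1] _ [n2 IH2]].
  - exists n; apply der_hyp; exact Hn.
  - exists 0; apply der_thm; exact Ha.
  - exists (max n1 n2); apply der_mp with a; [revert IH1|revert IH2];
      apply derives_mono, lindenbaum_stage_mono; lia.
Qed.

Lemma lindenbaum_limit_not_phi : ~ derives Gamma lindenbaum_limit phi.
Proof.
  intro D; destruct (lindenbaum_limit_compact phi D) as [n Hn].
  exact (lindenbaum_stage_not_phi n Hn).
Qed.

Lemma lindenbaum_limit_maximal x :
  ~ lindenbaum_limit x -> derives Gamma lindenbaum_limit (Imp x phi).
Proof.
  intro Hx; apply deduction, NNPP; intro Hnd.
  apply Hx; exists (S (code x)); right; split; [reflexivity|].
  intro D; apply Hnd; revert D; apply derives_mono.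
  intros y [Hy|Hy]; [left; exists (code x); exact Hy|right; exact Hy].
Qed.

Lemma lindenbaum : exists w : ptheory, (forall x, T x -> w x) /\ ~ w phi.
Proof.
  assert (closed : forall a, derives Gamma lindenbaum_limit a -> lindenbaum_limit a).
  { intros a Da; apply NNPP; intro Hna; apply lindenbaum_limit_not_phi.
    eapply der_mp; [apply lindenbaum_limit_maximal, Hna|exact Da]. }
  assert (consistent : ~ lindenbaum_limit Bot).
  { intro Hbot; apply lindenbaum_limit_not_phi.
    eapply der_mp; [apply derives_ipc, ax_EFQ|apply der_hyp, Hbot]. }
  assert (prime : forall a b, lindenbaum_limit (Or a b) ->
                              lindenbaum_limit a \/ lindenbaum_limit b).
  { intros a b Hab; apply NNPP; intro Hn; apply lindenbaum_limit_not_phi.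
    eapply der_mp; [eapply der_mp; [eapply der_mp; [apply derives_ipc, ax_OE|]|]|];
      [apply lindenbaum_limit_maximal|apply lindenbaum_limit_maximal|apply der_hyp, Hab];
      tauto. }
  exists (Build_ptheory lindenbaum_limit closed consistent prime); simpl; split.
  - intros x Hx; exists 0; exact Hx.
  - intro Hphi; apply lindenbaum_limit_not_phi, der_hyp, Hphi.
Qed.

End Lindenbaum.

Section PrimeTheories.

Context {Gamma : form -> Prop}.

Implicit Types (G D : ptheory Gamma) (a b : form).

Lemma pt_thm G a : ICK_plus Gamma a -> G a.
Proof. intro; apply pt_closed, der_thm; assumption. Qed.

Lemma pt_mp G a b : G (Imp a b) -> G a -> G b.
Proof. intros; apply pt_closed; eapply der_mp; apply der_hyp; eassumption. Qed.

Lemma pt_imp G a b : ICK_plus Gamma (Imp a b) -> G a -> G b.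
Proof. intro; apply pt_mp, pt_thm; assumption. Qed.

Lemma pt_and G a b : G (And a b) <-> G a /\ G b.
Proof.
  split.
  - intro; split; eapply pt_imp; eauto; apply d_ipc; constructor.
  - intros [Ha Hb]; eapply pt_mp; [eapply pt_mp; [apply pt_thm, d_ipc, ax_AI|]|]; eauto.
Qed.

Lemma pt_or G a b : G (Or a b) <-> G a \/ G b.
Proof.
  split; [apply pt_prime|].
  intros [H|H]; eapply pt_imp; eauto; apply d_ipc; constructor.
Qed.

Definition cond_succ a G D : Prop := forall psi, G (Cond a psi) -> D psi.

Lemma pt_cond_mono G a x y : ICK_plus Gamma (Imp x y) -> G (Cond a x) -> G (Cond a y).
Proof.
  intros Hxy Hx.
  assert (Hxy' : G (Cond a (And x y))).
  { eapply pt_imp; [apply ICK_iff_elim1, d_congr, ICK_iff_andr, Hxy|exact Hx]. }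
  apply (pt_imp _ _ _ (ICK_iff_elim1 _ _ _ (ICK_cond_and _ a x y))), pt_and in Hxy'.
  tauto.
Qed.

Lemma pt_cond_closed G a b : derives Gamma (fun psi => G (Cond a psi)) b -> G (Cond a b).
Proof.
  intro D; induction D as [b Hb|b Hb|x y _ IH1 _ IH2].
  - exact Hb.
  - apply (pt_cond_mono G a Top); [eapply d_mp; [apply d_ipc, ax_K|exact Hb]|].
    eapply pt_imp; [apply ICK_iff_elim2, ICK_cond_top|apply pt_thm, d_ipc, ax_EFQ].
  - apply (pt_cond_mono G a (And (Imp x y) x)); [apply ICK_modus_ponens|].
    eapply pt_imp; [apply ICK_iff_elim2, ICK_cond_and|apply pt_and; auto].
Qed.

Lemma cond_succ_witness G a b : ~ G (Cond a b) -> exists D, cond_succ a G D /\ ~ D b.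
Proof.
  intro Hab; apply lindenbaum; intro D; apply Hab, pt_cond_closed, D.
Qed.

Lemma ptheory_separates a b :
  ~ ICK_plus Gamma (Imp a b) -> exists D : ptheory Gamma, D a /\ ~ D b.
Proof.
  intro Hab; destruct (lindenbaum Gamma (extend (fun _ => False) a) b) as [D [HD HDb]].
  - intro Dab; apply Hab, ICK_imp_intro, Dab.
  - exists D; split; [apply HD; right; reflexivity|exact HDb].
Qed.

End PrimeTheories.

Lemma iCC_cond_refl a : iCC (Cond a a).
Proof. exact (d_subst _ (subst3 a a a) _ (d_gam _ _ icc_id)). Qed.

Lemma iCC_cut a b c : iCC (Imp (And (Cond a b) (Cond (And a b) c)) (Cond a c)).
Proof. exact (d_subst _ (subst3 a b c) _ (d_gam _ _ icc_cut)). Qed.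

Lemma iCC_cautious_mono a b c : iCC (Imp (And (Cond a b) (Cond a c)) (Cond (And a b) c)).
Proof. exact (d_subst _ (subst3 a b c) _ (d_gam _ _ icc_cm)). Qed.

Section CanonicalModel.

Notation world := (ptheory icc_extra).

Implicit Types (G D : world) (A B : world -> Prop) (a b : form).

Lemma cond_equiv_of_succ G a b :
  (forall D, cond_succ a G D -> D b) -> (forall D, D b -> D a) ->
  forall psi, G (Cond a psi) <-> G (Cond b psi).
Proof.
  intros Hab Hba.
  assert (Gab : G (Cond a b)).
  { apply NNPP; intro Hn; destruct (cond_succ_witness G a b Hn) as [D [HD HDb]].
    exact (HDb (Hab D HD)). }
  assert (ba : iCC (Imp b a)).
  { apply NNPP; intro Hn; destruct (ptheory_separates b a Hn) as [D [HDb HDa]].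
    exact (HDa (Hba D HDb)). }
  (* [And a b] is equivalent to [b]; cut and cautious monotonicity pass between [a] and [And a b]. *)
  intro psi; pose proof (d_congl _ _ _ psi (ICK_iff_andl _ _ _ ba)) as E; split; intro H.
  - eapply pt_imp; [apply ICK_iff_elim1, E|].
    eapply pt_imp; [apply iCC_cautious_mono|apply pt_and; auto].
  - eapply pt_imp; [apply (iCC_cut a b psi)|apply pt_and; split; [exact Gab|]].
    eapply pt_imp; [apply ICK_iff_elim2, E|exact H].
Qed.

Definition represents A G a : Prop :=
  (forall D, cond_succ a G D -> A D) /\ (forall D, A D -> D a).

Definition canon_rel A G D : Prop :=
  (exists a, represents A G a /\ cond_succ a G D) \/
  ((forall a, ~ represents A G a) /\ A D).

Lemma represents_unique A G a b : represents A G a -> represents A G b ->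
  forall psi, G (Cond a psi) <-> G (Cond b psi).
Proof.
  intros [HaA HAa] [HbA HAb].
  assert (to_and : forall c, (forall D, cond_succ c G D -> A D) ->
                   (forall D, D a -> D b -> D c) ->
                   forall psi, G (Cond c psi) <-> G (Cond (And a b) psi)).
  { intros c HcA Habc; apply cond_equiv_of_succ.
    - intros D HD; apply pt_and; split; [apply HAa|apply HAb]; apply HcA, HD.
    - intros D HD; apply pt_and in HD; apply Habc; apply HD. }
  intro psi; rewrite (to_and a HaA (fun _ Ha _ => Ha)), (to_and b HbA (fun _ _ Hb => Hb)).
  reflexivity.
Qed.

Lemma canon_rel_represents A G a D : represents A G a -> canon_rel A G D <-> cond_succ a G D.
Proof.
  intro Ha; split.
  - intros [[b [Hb HD]]|[Hn _]].
    + intros psi Hpsi; apply HD, (represents_unique A G a b Ha Hb), Hpsi.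
    + contradiction (Hn a Ha).
  - intro HD; left; exists a; split; assumption.
Qed.

Lemma canon_rel_in A G D : canon_rel A G D -> A D.
Proof. intros [[a [[HaA _] HD]]|[_ HD]]; auto. Qed.

Lemma represents_ext A B G a : (forall D, A D <-> B D) -> represents A G a -> represents B G a.
Proof. intros E [HaA HAa]; split; intros D HD; [apply E, HaA, HD|apply HAa, E, HD]. Qed.

Lemma canon_rel_ext A B : (forall D, A D <-> B D) -> forall G D, canon_rel A G D <-> canon_rel B G D.
Proof.
  intros E G D.
  assert (E' : forall D, B D <-> A D) by (intro; symmetry; apply E).
  unfold canon_rel; split; intros [[a [Ha HD]]|[Hn HD]].
  1,3: left; exists a; split; [eapply represents_ext; eassumption|exact HD].
  all: right; split; [intros a Ha; eapply Hn, represents_ext; eassumption|apply E; exact HD].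
Qed.

Definition subtheory G D : Prop := forall x, G x -> D x.

Lemma canon_rel_coh A G G' D' : subtheory G G' -> canon_rel A G' D' ->
  exists D, canon_rel A G D /\ subtheory D D'.
Proof.
  intros HGG' HD'; exists D'; split; [|intros x Hx; exact Hx].
  destruct (classic (exists a, represents A G a)) as [[a [HaA HAa]]|Hn].
  - assert (Ha' : represents A G' a).
    { split; [|exact HAa]. intros D HD; apply HaA; intros psi Hpsi; apply HD, HGG', Hpsi. }
    apply (canon_rel_represents A G' a D' Ha') in HD'.
    apply (canon_rel_represents A G a D' (conj HaA HAa)).
    intros psi Hpsi; apply HD', HGG', Hpsi.
  - right; split; [intros a Ha; apply Hn; exists a; exact Ha|exact (canon_rel_in A G' D' HD')].
Qed.

Definition canon_frame (h : inhabited world) : cframe :=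
  CFrame world subtheory canon_rel h
    (fun G x Hx => Hx)
    (fun G D E HGD HDE x Hx => HDE x (HGD x Hx))
    canon_rel_ext
    (fun A _ => canon_rel_coh A).

Lemma canon_frame_cautious h : cautious (canon_frame h).
Proof.
  split.
  - intros G A _ D HD; exact (canon_rel_in A G D HD).
  - intros G A B _ _ HAB HBA D; simpl in *.
    assert (E : forall D, canon_rel A G D <-> canon_rel B G D).
    { intro D'; destruct (classic (exists a, represents A G a)) as [[a Ha]|Hn].
      - assert (HaB : represents B G a).
        { split.
          - intros D'' HD''; apply HAB, (canon_rel_represents A G a D'' Ha), HD''.
          - intros D'' HD''; apply (proj2 Ha), HBA, HD''. }
        rewrite (canon_rel_represents A G a D' Ha), (canon_rel_represents B G a D' HaB).
        reflexivity.
      - apply canon_rel_ext; intro D''; split; [|apply HBA].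
        intro HD''; apply HAB; right; split; [intros a Ha; apply Hn; exists a|]; assumption. }
    unfold upclosure; split; intros [s [Hs hsD]]; exists s; split; auto; apply E, Hs.
Qed.

Definition canon_val (n : nat) (G : world) : Prop := G (Var n).

Lemma canon_truth h f G : forces (canon_frame h) canon_val G f <-> G f.
Proof.
  revert G.
  induction f as [n| |a IHa b IHb|a IHa b IHb|a IHa b IHb|a IHa b IHb]; intro G; simpl.
  - reflexivity.
  - split; [tauto|apply pt_consistent].
  - rewrite pt_and, IHa, IHb; reflexivity.
  - rewrite pt_or, IHa, IHb; reflexivity.
  - split.
    + intro H; apply NNPP; intro Hn.
      destruct (lindenbaum icc_extra (extend G a) b) as [D [HGD HDb]].
      * intro Dab; apply Hn, pt_closed, deduction, Dab.
      * apply HDb, IHb, H.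
        -- intros x Hx; apply HGD; left; exact Hx.
        -- apply IHa, HGD; right; reflexivity.
    + intros H D HGD HDa; apply IHb; eapply pt_mp; [apply HGD, H|apply IHa, HDa].
  - assert (E : forall D, canon_rel (fun D => forces (canon_frame h) canon_val D a) G D <->
                          cond_succ a G D).
    { intro D; rewrite (canon_rel_ext _ (fun D => D a) IHa).
      apply canon_rel_represents; split; [|auto].
      intros D' HD'; apply HD', pt_thm, iCC_cond_refl. }
    split.
    + intro H; apply NNPP; intro Hn.
      destruct (cond_succ_witness G a b Hn) as [D [HD HDb]].
      apply HDb, IHb, H, E, HD.
    + intros H D HD; apply IHb, (proj1 (E D) HD), H.
Qed.

End CanonicalModel.

Lemma iCC_complete f : (forall F, cautious F -> valid F f) -> iCC f.
Proof.
  intro Hvalid; apply NNPP; intro Hf.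
  destruct (lindenbaum icc_extra (fun _ => False) f) as [G [_ HGf]].
  - intro D; apply Hf, derives_empty, D.
  - apply HGf, (canon_truth (inhabits G)).
    apply (Hvalid _ (canon_frame_cautious _)).
    intros n G1 G2 HG12 HG1; exact (HG12 _ HG1).
Qed.

Theorem theorem6p7 :
  forall f : form, iCC f <-> (forall F : cframe, cautious F -> valid F f).
Proof.
  intro f; split; [apply iCC_sound|apply iCC_complete].
Qed.
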